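(* Let $\delta>0$. Let $(x^\star,u^\star)\in\mathbb{R}^n\times\mathbb{R}^m$ satisfy $f(x^\star)+g(x^\star)u^\star=0$, and write $g^\star:=g(x^\star)$. Then: (a) $x^\star$ is an equilibrium of the midpoint-discretized model with input $u^\star$, i.e. the constant sequences $x_k\equiv x^\star$, $u_k\equiv u^\star$ satisfy $x_{k+1}=x_k+\delta f(z_k)+\delta g(z_k)u_k$ with $z_k=\tfrac12(x_{k+1}+x_k)$. (b) For any sequences $(x_k)_{k\in\mathbb{N}}\subset\mathbb{R}^n$, $(u_k)_{k\in\mathbb{N}}\subset\mathbb{R}^m$ satisfying $$x_{k+1}=x_k+\delta f(z_k)+\delta g(z_k)u_k,\qquad z_k:=\tfrac12(x_{k+1}+x_k),$$ define the output $y_k:=(g^\star)^\top Q z_k$, the equilibrium output $y^\star:=(g^\star)^\top Q x^\star$, and the errors $\tilde x_k:=x_k-x^\star$, $\tilde z_k:=z_k-x^\star$, $\tilde u_k:=u_k-u^\star$, $\tilde y_k:=y_k-y^\star$. Then for every $k\in\mathbb{N}$, $$\frac{1}{\delta}\big(H(\tilde x_{k+1})-H(\tilde x_k)\big)=-\tilde z_k^\top QRQ\,\tilde z_k+\tilde y_k^\top\tilde u_k\le \tilde y_k^\top\tilde u_k,$$ i.e. the map $\tilde u_k\mapsto\tilde y_k$ is passive with storage function $H(\tilde x_k)$ (shifted passivity).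
   Context: Power converter model: fix integers $n,m\ge1$, a symmetric positive definite matrix $Q\in\mathbb{R}^{n\times n}$, skew-symmetric matrices $J_0,J_1,\dots,J_m\in\mathbb{R}^{n\times n}$ ($J_i^\top=-J_i$), a symmetric positive semidefinite matrix $R\in\mathbb{R}^{n\times n}$, matrices $G_0,G_1,\dots,G_m\in\mathbb{R}^{n\times n}$, and a constant vector $E\in\mathbb{R}^n$. Define $H(x):=\tfrac12 x^\top Qx$, $f(x):=(J_0-R)Qx+G_0E\in\mathbb{R}^n$, and $g(x)\in\mathbb{R}^{n\times m}$ as the matrix whose $i$-th column is $J_iQx+G_iE$, $i=1,\dots,m$. The continuous-time model is $\dot x=f(x)+g(x)u$; its midpoint (implicit midpoint rule) discretization with sampling time $\delta>0$ is $x_{k+1}=x_k+\delta f(z_k)+\delta g(z_k)u_k$ with $z_k=\tfrac12(x_{k+1}+x_k)$. *)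

From mathcomp Require Import all_boot all_order all_algebra.
Set Implicit Arguments. Unset Strict Implicit. Unset Printing Implicit Defensive.
Import Order.TTheory GRing.Theory Num.Theory.
Local Open Scope ring_scope.

Section Model.
Variables (R : realFieldType) (n m : nat).

Definition sc (A : 'M[R]_1) : R := A 0 0.

Definition qf (x : 'cV[R]_n) (A : 'M[R]_n) (y : 'cV[R]_n) : R := sc (x^T *m A *m y).

Definition is_symm (A : 'M[R]_n) : Prop := A^T = A.
Definition is_skewsym (A : 'M[R]_n) : Prop := A^T = - A.
Definition is_posdef (A : 'M[R]_n) : Prop :=
  is_symm A /\ forall x : 'cV[R]_n, x != 0 -> 0 < qf x A x.
Definition is_possemidef (A : 'M[R]_n) : Prop :=
  is_symm A /\ forall x : 'cV[R]_n, 0 <= qf x A x.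

Definition Ham (Q : 'M[R]_n) (x : 'cV[R]_n) : R := 2^-1 * qf x Q x.

Definition fdrift (Q J0 Rm G0 : 'M[R]_n) (E x : 'cV[R]_n) : 'cV[R]_n :=
  (J0 - Rm) *m Q *m x + G0 *m E.

Definition ginput (Q : 'M[R]_n) (J G : 'I_m -> 'M[R]_n) (E x : 'cV[R]_n)
  : 'M[R]_(n, m) :=
  \matrix_(r < n, i < m) (J i *m Q *m x + G i *m E) r 0.

Definition midpoint_step (delta : R) (Q J0 Rm G0 : 'M[R]_n)
  (J G : 'I_m -> 'M[R]_n) (E : 'cV[R]_n)
  (x x' : 'cV[R]_n) (u : 'cV[R]_m) : Prop :=
  let z := 2^-1 *: (x' + x) in
  x' = x + delta *: fdrift Q J0 Rm G0 E z + delta *: (ginput Q J G E z *m u).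

End Model.

From mathcomp Require Import all_boot all_order all_algebra ring lra.
Import Order.TTheory GRing.Theory Num.Theory.
Local Open Scope ring_scope.
Set Implicit Arguments. Unset Strict Implicit.

(* The implicit midpoint rule is a discrete gradient for quadratic energies:
   H(x' - xs) - H(x - xs) = (x' - x)^T Q (z - xs) exactly, with z the midpoint.
   Substituting the step x' - x = delta (f(z) + g(z) u) and subtracting the
   equilibrium relation f(xs) + g(xs) us = 0, the skew-symmetric parts J_0, J_i
   contribute nothing to (z - xs)^T Q (...), leaving the dissipation
   -(z - xs)^T Q R Q (z - xs) <= 0 and the supply rate y~^T u~. *)

Section QuadraticForm.
Variables (R : realFieldType) (n : nat).
Implicit Types (p q r : 'cV[R]_n) (A B : 'M[R]_n).

Lemma qfDl p q r A : qf (p + q) A r = qf p A r + qf q A r.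
Proof. by rewrite /qf /sc raddfD /= !mulmxDl !mxE. Qed.

Lemma qfNl p r A : qf (- p) A r = - qf p A r.
Proof. by rewrite /qf /sc raddfN /= !mulNmx !mxE. Qed.

Lemma qfZl c p r A : qf (c *: p) A r = c * qf p A r.
Proof. by rewrite /qf /sc linearZ /= -!scalemxAl !mxE. Qed.

Lemma qfDr p q r A : qf r A (p + q) = qf r A p + qf r A q.
Proof. by rewrite /qf /sc !mulmxDr !mxE. Qed.

Lemma qfNr p r A : qf r A (- p) = - qf r A p.
Proof. by rewrite /qf /sc !mulmxN !mxE. Qed.

Lemma qfZr c p r A : qf r A (c *: p) = c * qf r A p.
Proof. by rewrite /qf /sc -!scalemxAr !mxE. Qed.

Lemma qfNm p q A : qf p (- A) q = - qf p A q.
Proof. by rewrite /qf /sc mulmxN mulNmx !mxE. Qed.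

Lemma qf_mull p q A B : qf (A *m p) B q = qf p (A^T *m B) q.
Proof. by rewrite /qf trmx_mul !mulmxA. Qed.

Lemma qf_mulr p q A B : qf p B (A *m q) = qf p (B *m A) q.
Proof. by rewrite /qf !mulmxA. Qed.

Lemma qf_tr p q A : qf p A q = qf q A^T p.
Proof.
have sc_tr (M : 'M[R]_1) : sc M = sc M^T by rewrite /sc mxE.
by rewrite /qf sc_tr !trmx_mul trmxK mulmxA.
Qed.

Lemma qf_sum (I : finType) (F : I -> 'cV[R]_n) r A :
  qf (\sum_i F i) A r = \sum_i qf (F i) A r.
Proof.
apply: (big_morph (fun p => qf p A r)); first by move=> *; rewrite qfDl.
by rewrite /qf /sc linear0 !mul0mx mxE.
Qed.

Lemma qf_skew p A : is_skewsym A -> qf p A p = 0.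
Proof. by move=> skA; have := qf_tr p p A; rewrite skA qfNm; lra. Qed.

Lemma qf_congruence_ge0 p A B : is_possemidef B -> 0 <= qf p (A^T *m B *m A) p.
Proof. by case=> _ psdB; rewrite -qf_mulr -qf_mull. Qed.

Lemma Ham_midpoint_diff A p q : is_symm A ->
  Ham A (p + 2^-1 *: q) - Ham A (p - 2^-1 *: q) = qf q A p.
Proof.
move=> symA; rewrite /Ham !(qfDl, qfDr, qfNl, qfNr, qfZl, qfZr).
by rewrite [qf p A q]qf_tr symA; field.
Qed.

Lemma Ham_discrete_gradient A x x' xs : is_symm A ->
  Ham A (x' - xs) - Ham A (x - xs) = qf (x' - x) A (2^-1 *: (x' + x) - xs).
Proof.
move=> symA; rewrite -Ham_midpoint_diff //; congr (Ham A _ - Ham A _).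
  by apply/matrixP=> i j; rewrite !mxE; field.
by apply/matrixP=> i j; rewrite !mxE; field.
Qed.

End QuadraticForm.

Section ShiftedPassivity.
Variables (R : realFieldType) (n m : nat).
Variables (Q J0 Rm G0 : 'M[R]_n) (J G : 'I_m -> 'M[R]_n) (E : 'cV[R]_n).
Hypotheses (symQ : is_symm Q) (skJ0 : is_skewsym J0).
Hypothesis skJ : forall i, is_skewsym (J i).

Definition ginput_lin (w : 'cV[R]_n) : 'M[R]_(n, m) :=
  \matrix_(r < n, i < m) (J i *m Q *m w) r 0.

Lemma ginputB (x xs : 'cV[R]_n) :
  ginput Q J G E x - ginput Q J G E xs = ginput_lin (x - xs).
Proof.
apply/matrixP=> r i; rewrite !mxE opprD addrACA subrr addr0 -sumrB.
by apply: eq_bigr => j _; rewrite !mxE mulrBr.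
Qed.

Lemma fdriftB (x xs : 'cV[R]_n) :
  fdrift Q J0 Rm G0 E x - fdrift Q J0 Rm G0 E xs = (J0 - Rm) *m Q *m (x - xs).
Proof. by rewrite /fdrift mulmxBr opprD addrACA subrr addr0. Qed.

Lemma ginput_lin_mul (w : 'cV[R]_n) (u : 'cV[R]_m) :
  ginput_lin w *m u = \sum_i u i 0 *: (J i *m Q *m w).
Proof.
apply/matrixP=> r c; rewrite ord1 !mxE summxE; apply: eq_bigr => i _.
by rewrite !mxE mulrC.
Qed.

Lemma qf_skew_mulQ (A : 'M[R]_n) (w : 'cV[R]_n) : is_skewsym A ->
  qf (A *m Q *m w) Q w = 0.
Proof.
move=> skA; rewrite -mulmxA !qf_mull; apply: qf_skew.
by rewrite /is_skewsym !trmx_mul !trmxK skA mulNmx mulmxN mulmxA opprK.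
Qed.

Lemma qf_ginput_lin (w : 'cV[R]_n) (u : 'cV[R]_m) :
  qf (ginput_lin w *m u) Q w = 0.
Proof.
rewrite ginput_lin_mul qf_sum big1 // => i _.
by rewrite qfZl qf_skew_mulQ ?mulr0.
Qed.

Lemma shifted_power_balance (x xs : 'cV[R]_n) (u us : 'cV[R]_m) :
  qf (fdrift Q J0 Rm G0 E x + ginput Q J G E x *m u
      - (fdrift Q J0 Rm G0 E xs + ginput Q J G E xs *m us)) Q (x - xs)
  = - qf (x - xs) (Q *m Rm *m Q) (x - xs)
    + sc (((ginput Q J G E xs)^T *m Q *m (x - xs))^T *m (u - us)).
Proof.
set gs := ginput Q J G E xs; set w := x - xs.
have split_gain : ginput Q J G E x *m u - gs *m us
    = ginput_lin w *m u + gs *m (u - us).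
  by rewrite -ginputB mulmxBl mulmxBr addrA subrK.
rewrite opprD addrACA fdriftB split_gain -/w !mulmxBl.
rewrite [LHS]qfDl [qf (_ - _) _ _]qfDl qfNl qf_skew_mulQ // add0r.
rewrite [qf (_ + _) _ _]qfDl qf_ginput_lin add0r; congr (- _ + _).
  by rewrite -mulmxA !qf_mull qf_tr !trmx_mul trmxK !symQ.
by rewrite qf_tr symQ /qf !trmx_mul trmxK !mulmxA symQ.
Qed.

Lemma midpoint_step_increment delta (x x' : 'cV[R]_n) (u : 'cV[R]_m) :
  midpoint_step delta Q J0 Rm G0 J G E x x' u ->
  x' - x = delta *: (fdrift Q J0 Rm G0 E (2^-1 *: (x' + x))
                     + ginput Q J G E (2^-1 *: (x' + x)) *m u).
Proof. by move=> {1}->; rewrite addrAC [x + _]addrC addrK -scalerDr. Qed.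

End ShiftedPassivity.

Theorem proposition2 (R : realFieldType) (n m : nat)
  (Q : 'M[R]_n) (J0 : 'M[R]_n) (J : 'I_m -> 'M[R]_n) (Rm : 'M[R]_n)
  (G0 : 'M[R]_n) (G : 'I_m -> 'M[R]_n) (E : 'cV[R]_n)
  (hn : (1 <= n)%N) (hm : (1 <= m)%N)
  (hQ : is_posdef Q) (hJ0 : is_skewsym J0) (hJ : forall i, is_skewsym (J i))
  (hR : is_possemidef Rm)
  (delta : R) (hdelta : 0 < delta)
  (xs : 'cV[R]_n) (us : 'cV[R]_m)
  (heq : fdrift Q J0 Rm G0 E xs + ginput Q J G E xs *m us = 0) :
  (* (a) equilibrium of the discretized model *)
  (forall k : nat,
     midpoint_step delta Q J0 Rm G0 J G E ((fun _ : nat => xs) k)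
       ((fun _ : nat => xs) k.+1) ((fun _ : nat => us) k))
  /\
  (* (b) shifted passivity *)
  (forall (x : nat -> 'cV[R]_n) (u : nat -> 'cV[R]_m),
     (forall k, midpoint_step delta Q J0 Rm G0 J G E (x k) (x k.+1) (u k)) ->
     let gs := ginput Q J G E xs in
     forall k : nat,
       let z := 2^-1 *: (x k.+1 + x k) in
       let y := gs^T *m Q *m z in
       let ys := gs^T *m Q *m xs in
       let xt := x k - xs in
       let xt' := x k.+1 - xs in
       let zt := z - xs in
       let ut := u k - us in
       let yt := y - ys in
       delta^-1 * (Ham Q xt' - Ham Q xt)
         = - qf zt (Q *m Rm *m Q) zt + sc (yt^T *m ut)
       /\ - qf zt (Q *m Rm *m Q) zt + sc (yt^T *m ut) <= sc (yt^T *m ut)).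
Proof.
have [symQ _] := hQ.
split=> [k | x u steps gs k z y ys xt xt' zt ut yt].
  have mid_xs : 2^-1 *: (xs + xs) = xs.
    by apply/matrixP=> i j; rewrite !mxE; field.
  by rewrite /midpoint_step mid_xs -addrA -scalerDr heq scaler0 addr0.
have dissip_ge0 : 0 <= qf zt (Q *m Rm *m Q) zt.
  by rewrite -[in Q *m _]symQ qf_congruence_ge0.
have balance := shifted_power_balance Rm G0 G E symQ hJ0 hJ z xs (u k) us.
rewrite heq subr0 in balance.
have -> : yt = gs^T *m Q *m zt by rewrite /yt /y /ys /zt mulmxBr.
split; last by lra.
rewrite Ham_discrete_gradient // (midpoint_step_increment (steps k)) qfZl.
by rewrite balance mulrA mulVf ?mul1r ?gt_eqF.
Qed.
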